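(* Let $\mathcal{C}$ be a clutter whose vertex set is a subset of $\{x_1,\dots,x_n\}$, $S=\mathbb{K}[x_1,\dots,x_n]$ with $\mathbb{K}$ a field. If $\{e_1,\dots,e_s\}$ is a 2-collage in $\mathcal{C}$, then \[ \operatorname{sreg}(S/I(\mathcal{C}))\le\sum_{i=1}^s(|e_i|-1). \]
   Context: A clutter $\mathcal{C}$ consists of a finite vertex set and a collection $E(\mathcal{C})$ of subsets (edges), no edge containing another; vertices are identified with variables and $I(\mathcal{C})=(\prod_{x\in e}x : e\in E(\mathcal{C}))$ is the edge ideal. A 2-collage for $\mathcal{C}$ is a subset $C\subseteq E(\mathcal{C})$ such that for each $e\in E(\mathcal{C})$ there is a vertex $v$ with $e\setminus\{v\}$ contained in some edge of $C$. Stanley regularity: for a squarefree monomial ideal $I\subset S$, a squarefree Stanley decomposition of $S/I$ is a decomposition $S/I=\bigoplus_{i=1}^r u_i\mathbb{K}[Z_i]$ as $\mathbb{K}$-vector spaces, where $Z_i\subseteq\{x_1,\dots,x_n\}$, $u_i$ are (images of) squarefree monomials with $\operatorname{supp}(u_i)\subseteq Z_i$, and each $u_i\mathbb{K}[Z_i]$ is free over $\mathbb{K}[Z_i]$. Its Stanley regularity is $\max_i\deg(u_i)$, and $\operatorname{sreg}(S/I)$ is the minimum over all such decompositions. *)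

From HB Require Import structures.
From mathcomp Require Import all_boot all_algebra.
From mathcomp Require Import mpoly.
Set Implicit Arguments. Unset Strict Implicit. Unset Printing Implicit Defensive.
Import GRing.Theory.
Local Open Scope ring_scope.

Definition is_clutter (n : nat) (V : {set 'I_n}) (E : {set {set 'I_n}}) : Prop :=
  (forall e, e \in E -> e \subset V) /\
  (forall e f, e \in E -> f \in E -> e \subset f -> e = f).

Definition two_collage (n : nat) (V : {set 'I_n}) (E C : {set {set 'I_n}}) : Prop :=
  C \subset E /\
  (forall e, e \in E -> exists v, v \in V /\ exists2 c, c \in C & e :\ v \subset c).

Definition sqmon (K : fieldType) (n : nat) (A : {set 'I_n}) : {mpoly K[n]} :=
  \prod_(i in A) 'X_i.

Definition in_edge_ideal (K : fieldType) (n : nat) (E : {set {set 'I_n}})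
    (g : {mpoly K[n]}) : Prop :=
  exists h : {set 'I_n} -> {mpoly K[n]}, g = \sum_(e in E) h e * sqmon K e.

Definition in_subring (K : fieldType) (n : nat) (Z : {set 'I_n})
    (p : {mpoly K[n]}) : Prop :=
  forall m, m \in msupp p -> forall i : 'I_n, i \notin Z -> m i = 0%N.

(* A squarefree Stanley decomposition S/I = (+)_{i<r} u_i K[Z_i], with
   u_i = sqmon (U i), supp(u_i) = U i ⊆ Z i, is given by r, U, Z such that the
   K-linear map  (f_i)_i in prod_i K[Z_i]  |->  sum_i u_i f_i  mod I
   is a bijection onto S/I (surjectivity = the summands span S/I;
   injectivity = the sum is direct and each u_i K[Z_i] is free over K[Z_i]). *)
Definition stanley_decomposition (K : fieldType) (n : nat) (E : {set {set 'I_n}})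
    (r : nat) (U Z : 'I_r -> {set 'I_n}) : Prop :=
  (forall i, U i \subset Z i) /\
  (forall g : {mpoly K[n]}, exists f : 'I_r -> {mpoly K[n]},
      (forall i, in_subring (Z i) (f i)) /\
      in_edge_ideal E (g - \sum_(i < r) sqmon K (U i) * f i)) /\
  (forall f : 'I_r -> {mpoly K[n]},
      (forall i, in_subring (Z i) (f i)) ->
      in_edge_ideal E (\sum_(i < r) sqmon K (U i) * f i) ->
      forall i, f i = 0).

(* sreg(S/I(C)) <= b : some squarefree Stanley decomposition has Stanley
   regularity max_i deg(u_i) = max_i #|U i| at most b. *)
Definition sreg_le (K : fieldType) (n : nat) (E : {set {set 'I_n}}) (b : nat) : Prop :=
  exists r (U Z : 'I_r -> {set 'I_n}),
    stanley_decomposition K E U Z /\ forall i, (#|U i| <= b)%N.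

(* Let W be the union of the edges of the 2-collage C. The monomials outside
   I(C) are those whose support is a face, i.e. contains no edge. Every face F
   lies in exactly one interval [G, Z_G] with G a face inside W, namely for
   G = F ∩ W, where Z_G = G ∪ {u ∉ W | G ∪ {u} is a face}; conversely every set
   of such an interval is a face, because an edge has at most one vertex outside
   W. A partition of the faces into intervals [G, Z] gives the Stanley
   decomposition ⊕ x_G K[Z], of regularity max |G|; and a face G ⊆ W misses a
   vertex of every c ∈ C, so |G| ≤ Σ_{c ∈ C} (|c| - 1). *)
From HB Require Import structures.
From mathcomp Require Import all_boot all_algebra.
From mathcomp Require Import mpoly.
From mathcomp Require Import zify.
Set Implicit Arguments. Unset Strict Implicit. Unset Printing Implicit Defensive.
Import GRing.Theory.
Local Open Scope ring_scope.

Section SquarefreeMonomials.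
Variables (K : fieldType) (n : nat).
Implicit Types (A B F G Z : {set 'I_n}) (p q : {mpoly K[n]}) (m : 'X_{1..n}).

Definition mset A : 'X_{1..n} := [multinom ((i \in A) : nat) | i < n].

Definition supp m := [set i | m i != 0%N].

Lemma msetE A i : mset A i = (i \in A).
Proof. by rewrite mnmE. Qed.

Lemma sqmonE A : sqmon K A = 'X_[mset A].
Proof.
rewrite /sqmon mprodXE; congr mpolyX; apply/mnmP => i.
rewrite mnm_sumE msetE; case: (boolP (i \in A)) => iA.
  rewrite (bigD1 i) //= mnm1E eqxx big1 ?addn0 // => j /andP[_ ji].
  by rewrite mnm1E (negbTE ji).
rewrite big1 // => j jA; rewrite mnm1E; apply/eqP; rewrite eqb0.
by apply: contraNN iA => /eqP <-.
Qed.

Lemma lem_mset A m : (mset A <= m)%MM = (A \subset supp m).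
Proof.
apply/mnm_lepP/subsetP => [le_Am i iA|sub_A i]; rewrite ?inE.
  by have := le_Am i; rewrite msetE iA -lt0n.
by rewrite msetE; case: (boolP (i \in A)) => // /sub_A; rewrite inE lt0n.
Qed.

Lemma supp_subm m m' : supp (m - m')%MM \subset supp m.
Proof. by apply/subsetP => i; rewrite !inE mnmBE; apply: contraNN => /eqP ->. Qed.

Lemma mcoeffMX_cond p m k :
  (p * 'X_[m])@_k = if (m <= k)%MM then p@_(k - m)%MM else 0.
Proof.
case: ifP => le_mk; first by rewrite -{1}(submK le_mk) addmC mcoeffMX.
apply/eqP; rewrite mcoeff_eq0; apply/negP.
rewrite (perm_mem (msuppMX _ _)) => /mapP[m' _ km].
by rewrite km lem_addr in le_mk.
Qed.

Lemma in_subringP Z p :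
  in_subring Z p <-> forall m, m \in msupp p -> supp m \subset Z.
Proof.
split=> [sub_p m /sub_p mZ | sub_p m /sub_p /subsetP mZ i iZ].
  by apply/subsetP => i; rewrite inE; apply: contraNT => /mZ ->.
by apply/eqP; apply: contraNT iZ => mi; apply: mZ; rewrite inE.
Qed.

Lemma mcoeff_sqmonM_supp A Z p m :
  A \subset Z -> in_subring Z p -> (sqmon K A * p)@_m != 0 ->
  (A \subset supp m) && (supp m \subset Z).
Proof.
move=> AZ /in_subringP sub_p; rewrite mulrC sqmonE mcoeffMX_cond.
case: ifP => [le_Am|]; last by rewrite eqxx.
rewrite -mcoeff_msupp => /sub_p /subsetP sub_mA; rewrite -lem_mset le_Am /=.
apply/subsetP => i mi; case: (boolP (i \in A)) => [/(subsetP AZ) //|iA].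
by apply: sub_mA; rewrite inE mnmBE msetE (negbTE iA) subn0; rewrite inE in mi.
Qed.

Section EdgeIdeal.
Variable E : {set {set 'I_n}}.

Lemma edge_ideal0 : in_edge_ideal E (0 : {mpoly K[n]}).
Proof. by exists (fun _ => 0); rewrite big1 // => e _; rewrite mul0r. Qed.

Lemma edge_idealD p q :
  in_edge_ideal E p -> in_edge_ideal E q -> in_edge_ideal E (p + q).
Proof.
move=> [h1 ->] [h2 ->]; exists (fun e => h1 e + h2 e).
by rewrite -big_split /=; apply: eq_bigr => e _; rewrite mulrDl.
Qed.

Lemma edge_idealMl p q : in_edge_ideal E q -> in_edge_ideal E (p * q).
Proof.
move=> [h ->]; exists (fun e => p * h e).
by rewrite mulr_sumr; apply: eq_bigr => e _; rewrite mulrA.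
Qed.

Lemma edge_ideal_sum (T : Type) (r : seq T) (P : pred T) (F : T -> {mpoly K[n]}) :
  (forall x, P x -> in_edge_ideal E (F x)) ->
  in_edge_ideal E (\sum_(x <- r | P x) F x).
Proof.
move=> FE; elim/big_rec: _ => [|x y Px Ey]; first exact: edge_ideal0.
exact: edge_idealD (FE _ Px) Ey.
Qed.

Lemma edge_ideal_sqmon e : e \in E -> in_edge_ideal E (sqmon K e).
Proof.
move=> eE; exists (fun f => (f == e)%:R).
rewrite (bigD1 e) //= eqxx mul1r big1 ?addr0 // => f /andP[_ /negbTE ->].
by rewrite mul0r.
Qed.

Definition face A := [forall e in E, ~~ (e \subset A)].

Lemma faceP A : reflect (forall e, e \in E -> ~~ (e \subset A)) (face A).
Proof. exact: forall_inP. Qed.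

Lemma face_subset A B : A \subset B -> face B -> face A.
Proof.
move=> AB /faceP faceB; apply/faceP => e eE.
by apply: contra (faceB e eE) => /subset_trans; apply.
Qed.

Lemma edge_ideal_msupp p m :
  in_edge_ideal E p -> m \in msupp p -> ~~ face (supp m).
Proof.
move=> [h ->]; rewrite mcoeff_msupp; apply: contraNN => /faceP faceM.
rewrite raddf_sum /=; apply/eqP; apply: big1 => e eE.
by rewrite sqmonE mcoeffMX_cond lem_mset (negbTE (faceM e eE)).
Qed.

Lemma edge_idealX m : ~~ face (supp m) -> in_edge_ideal E ('X_[m] : {mpoly K[n]}).
Proof.
case/forall_inPn => e eE /negPn sub_e.
rewrite -(submK (_ : mset e <= m)%MM) ?lem_mset // mpolyXD -sqmonE.
exact/edge_idealMl/edge_ideal_sqmon.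
Qed.

End EdgeIdeal.

Definition in_interval G Z F := (G \subset F) && (F \subset Z).

Section IntervalPartition.
Variables (E : {set {set 'I_n}}) (r : nat) (U Z : 'I_r -> {set 'I_n}).
Hypothesis subUZ : forall i, U i \subset Z i.
Hypothesis interval_face : forall i F, in_interval (U i) (Z i) F -> face E F.
Hypothesis face_in_interval : forall F, face E F -> exists i, in_interval (U i) (Z i) F.
Hypothesis in_interval_inj :
  forall i j F, in_interval (U i) (Z i) F -> in_interval (U j) (Z j) F -> i = j.

Lemma in_interval_pred1 F i :
  in_interval (U i) (Z i) F -> (fun j => in_interval (U j) (Z j) F) =1 pred1 i.
Proof.
move=> Fi j /=; apply/idP/eqP => [Fj|->//].
exact: in_interval_inj Fj Fi.
Qed.

Lemma interval_decomposition_spans (g : {mpoly K[n]}) :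
  exists f : 'I_r -> {mpoly K[n]}, (forall i, in_subring (Z i) (f i)) /\
    in_edge_ideal E (g - \sum_(i < r) sqmon K (U i) * f i).
Proof.
pose f i := \sum_(m <- msupp g | face E (supp m) && in_interval (U i) (Z i) (supp m))
  g@_m *: ('X_[m - mset (U i)] : {mpoly K[n]}).
exists f; split.
  move=> i; apply/in_subringP => m' /msupp_sum_le /flattenP [s /mapP [m]].
  rewrite mem_filter => /andP[/andP[_ /andP[_ mZ]] _] -> /msuppZ_le.
  by rewrite msuppX mem_seq1 => /eqP ->; apply: subset_trans mZ; apply: supp_subm.
have -> : \sum_(i < r) sqmon K (U i) * f i =
          \sum_(m <- msupp g | face E (supp m)) g@_m *: 'X_[m].
  rewrite (eq_bigr (fun i => \sum_(m <- msupp g | face E (supp m) &&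
             in_interval (U i) (Z i) (supp m)) g@_m *: 'X_[m])); last first.
    move=> i _; rewrite mulr_sumr; apply: eq_bigr => m /andP[_ /andP[Um _]].
    by rewrite sqmonE -scalerAr -mpolyXD addmC submK // lem_mset.
  rewrite (exchange_big_dep (fun m => face E (supp m))) => [|i m _ /andP[] //] /=.
  apply: eq_bigr => m faceM; have [i0 Fi0] := face_in_interval faceM.
  by rewrite (big_pred1 i0) // => j /=; rewrite faceM; apply: in_interval_pred1.
rewrite {1}(mpolyE g) (bigID (fun m => face E (supp m))) /= [X in X - _]addrC addrK.
apply: edge_ideal_sum => m nonface.
by rewrite -mul_mpolyC; apply/edge_idealMl/edge_idealX.
Qed.

Lemma interval_decomposition_free (f : 'I_r -> {mpoly K[n]}) :
  (forall i, in_subring (Z i) (f i)) ->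
  in_edge_ideal E (\sum_(i < r) sqmon K (U i) * f i) -> forall i, f i = 0.
Proof.
move=> subf sumE i0; apply/eqP; apply: contraT; rewrite -msupp_eq0.
case def_s: (msupp (f i0)) => [//|m' s] _.
pose m := (mset (U i0) + m')%MM.
have coef_i0 : (sqmon K (U i0) * f i0)@_m != 0.
  by rewrite mulrC sqmonE mcoeffMX -mcoeff_msupp def_s mem_head.
have mi0 := mcoeff_sqmonM_supp (subUZ i0) (subf i0) coef_i0.
have : m \in msupp (\sum_(i < r) sqmon K (U i) * f i).
  rewrite mcoeff_msupp raddf_sum (bigD1 i0) //= big1 ?addr0 // => j ji0.
  apply/eqP; apply: contraNT ji0 => /(mcoeff_sqmonM_supp (subUZ j) (subf j)) mj.
  by apply/eqP; apply: in_interval_inj mj mi0.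
by move/(edge_ideal_msupp sumE); rewrite (interval_face mi0).
Qed.

Lemma stanley_decomposition_of_intervals : stanley_decomposition K E U Z.
Proof.
split; first exact: subUZ.
split; [exact: interval_decomposition_spans | exact: interval_decomposition_free].
Qed.

End IntervalPartition.

Lemma card_face_le_cover (E C : {set {set 'I_n}}) G :
  C \subset E -> face E G -> G \subset cover C ->
  (#|G| <= \sum_(c in C) (#|c| - 1))%N.
Proof.
rewrite /cover => CE; elim/big_rec2: _ G => [G _|c s W cC IH G faceG GW].
  by rewrite subset0 => /eqP ->; rewrite cards0.
have -> : G = (G :&: c) :|: (G :&: W) by rewrite -setIUr; apply/esym/setIidPl.
have lt_Gc : (#|G :&: c| < #|c|)%N.
  apply: proper_card; rewrite properE subsetIr /=; apply/negP => cG.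
  by move/faceP: faceG => /(_ c (subsetP CE c cC)); rewrite (subset_trans cG) ?subsetIl.
have le_GW : (#|G :&: W| <= s)%N.
  apply: IH; first by apply: face_subset faceG; apply: subsetIl.
  by apply/subsetP => x /setIP[xG xW]; move: (subsetP GW x xG); rewrite inE xW orbT.
rewrite cardsU; lia.
Qed.

Section Collage.
Variables (V : {set 'I_n}) (E C : {set {set 'I_n}}).
Hypothesis collageC : two_collage V E C.

Definition collage_top G := G :|: [set u | (u \notin cover C) && face E (u |: G)].

Lemma edge_outside_cover e :
  e \in E -> exists v, forall x, x \in e -> x \notin cover C -> x = v.
Proof.
case: collageC => _ collE /collE [v [_ [c cC sub_ec]]]; exists v => x xe.
apply: contraNeq => xv; apply/bigcupP; exists c => //.
by apply: (subsetP sub_ec); rewrite !inE xv.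
Qed.

Lemma collage_interval_cover G F :
  G \subset cover C -> in_interval G (collage_top G) F -> F :&: cover C = G.
Proof.
move=> GW /andP[GF FZ]; apply/eqP; rewrite eqEsubset subsetI GF GW !andbT.
apply/subsetP => x /setIP[xF xW]; move: (subsetP FZ x xF).
by rewrite !inE xW /= orbF.
Qed.

Lemma collage_interval_face G F :
  G \subset cover C -> face E G -> in_interval G (collage_top G) F -> face E F.
Proof.
move=> GW faceG FGZ; have FWG := collage_interval_cover GW FGZ.
case/andP: FGZ => GF FZ; apply/faceP => e eE; apply/negP => eF.
have [eW | /subsetPn[u ue uW]] := boolP (e \subset cover C).
  by move/faceP: faceG => /(_ e eE)/negP; apply; rewrite -FWG subsetI eF eW.
move: (subsetP FZ u (subsetP eF u ue)); rewrite !inE (negbTE uW) /=.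
case/orP => [uG | faceUG]; first by rewrite (subsetP GW u uG) in uW.
have [v onlyv] := edge_outside_cover eE.
move/faceP: faceUG => /(_ e eE)/negP; apply; apply/subsetP => x xe; rewrite !inE.
have [xW | xW] := boolP (x \in cover C).
  by rewrite -FWG inE xW (subsetP eF x xe) orbT.
by rewrite (onlyv x xe xW) (onlyv u ue uW) eqxx.
Qed.

Lemma face_in_collage_interval F :
  face E F -> in_interval (F :&: cover C) (collage_top (F :&: cover C)) F.
Proof.
move=> faceF; rewrite /in_interval subsetIl; apply/subsetP => x xF; rewrite !inE.
have [xW | xW] := boolP (x \in cover C); first by rewrite xF.
apply/orP; right; apply/andP; split=> //; apply: face_subset faceF.
by apply/subsetP => y; rewrite !inE; case/orP => [/eqP -> // | /andP[]].
Qed.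

End Collage.
End SquarefreeMonomials.

Theorem theorem5p16 (K : fieldType) (n : nat) (V : {set 'I_n})
    (E C : {set {set 'I_n}}) :
  is_clutter V E -> two_collage V E C ->
  sreg_le K E (\sum_(e in C) (#|e| - 1))%N.
Proof.
move=> _ collageC; have [CE _] := collageC.
pose P := [set G : {set 'I_n} | (G \subset cover C) && face E G].
pose G (i : 'I_#|P|) : {set 'I_n} := enum_val i.
have GP i : (G i \subset cover C) && face E (G i) by have := enum_valP i; rewrite inE.
have GW i : G i \subset cover C by case/andP: (GP i).
have faceG i : face E (G i) by case/andP: (GP i).
exists #|P|, G, (fun i => collage_top E C (G i)); split=> [|i]; last first.
  exact: card_face_le_cover CE (faceG i) (GW i).
apply: stanley_decomposition_of_intervals => [i | i F | F faceF | i j F Fi Fj].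
- exact: subsetUl.
- exact: (collage_interval_face collageC (GW i) (faceG i)).
- have FWP : F :&: cover C \in P.
    by rewrite inE subsetIr (face_subset (subsetIl _ _) faceF).
  exists (enum_rank_in FWP (F :&: cover C)); rewrite /G enum_rankK_in //.
  exact: face_in_collage_interval.
- apply: enum_val_inj; rewrite -[enum_val i]/(G i) -[enum_val j]/(G j).
  by rewrite -(collage_interval_cover (GW i) Fi) (collage_interval_cover (GW j) Fj).
Qed.
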